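(* Let $\ell\in\mathbb{Z}_{\ge2}$, let $b_{n,m}=b_{n,m}(\ell)$ be as in the context, and let $b_n=\sum_{m\ge0}b_{n,m}$. Put $a_n^a=\sqrt{2/\pi}\cdot n^{-1/2}\cdot 2^n$ and $$b_n^a=\begin{cases}\tfrac{\ell+1}{2\ell}\cdot a_n^a & \ell\text{ odd},\\ \tfrac{\ell+1+(-1)^{n+1}}{2\ell}\cdot a_n^a & \ell\text{ even}.\end{cases}$$ Then $b_n\sim b_n^a$ as $n\to\infty$, and $|b_n-b_n^a|/(n^{-1/2}\cdot 2^n)\in O(1/n)$.
   Context: For $n,m\in\mathbb{Z}_{\ge 0}$, $a_{n,m}$ is the number of unit step paths $(x_0,\dots,x_n)$ on $\mathbb{Z}_{\ge0}$ (integers $x_i\ge0$, $|x_i-x_{i-1}|=1$) with $x_0=0$, $x_n=m$. For fixed $\ell\in\mathbb{Z}_{\ge2}$, $b_{n,m}=b_{n,m}(\ell)$ is defined by: $b_{n,m}=a_{n,m}$ if $m\equiv-1\pmod\ell$; $b_{n,m}=b_{n-1,m-1}+b_{n-1,m+1}$ if $m\equiv m_0\pmod\ell$ with $0\le m_0<\ell-2$; $b_{n,m}=b_{n-1,m-1}$ if $m\equiv-2\pmod\ell$; the recursion is used for $n\ge1$ with $b_{0,0}=1$, $b_{0,m}=0$ for $m>0$, and $b_{n,-1}=0$. $\sim$ denotes asymptotic equality. *)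

From Stdlib Require Import Reals Arith List.
Open Scope R_scope.

(* a n m = number of unit step paths on Z>=0 of length n from 0 to m. *)
Fixpoint apath (n m : nat) : nat :=
  match n with
  | O => if Nat.eqb m 0 then 1%nat else 0%nat
  | S n' => ((match m with O => 0%nat | S m' => apath n' m' end)
             + apath n' (S m))%nat
  end.

(* b n m = b_{n,m}(l); the term b_{n-1,m-1} is 0 when m = 0 (b_{n,-1} = 0). *)
Fixpoint bpath (l n m : nat) : nat :=
  match n with
  | O => if Nat.eqb m 0 then 1%nat else 0%nat
  | S n' =>
      let left := match m with O => 0%nat | S m' => bpath l n' m' end in
      if Nat.eqb (m mod l) (l - 1) then apath n m
      else if Nat.eqb (m mod l) (l - 2) then left
      else (left + bpath l n' (S m))%nat
  end.

(* b_n = sum_{m >= 0} b_{n,m}; only m <= n can contribute (a path of length n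
   cannot reach beyond n), so the sum is taken over 0 <= m <= n. *)
Definition bsum (l n : nat) : nat :=
  fold_right Nat.add 0%nat (map (bpath l n) (seq 0 (S n))).

Definition a_asym (n : nat) : R := sqrt (2 / PI) * / sqrt (INR n) * 2 ^ n.

Definition b_asym (l n : nat) : R :=
  if Nat.even l
  then (INR l + 1 + (-1) ^ (S n)) / (2 * INR l) * a_asym n
  else (INR l + 1) / (2 * INR l) * a_asym n.

From Stdlib Require Import Reals Arith List Lia Lra.
From Coquelicot Require Import Coquelicot.
Open Scope R_scope.

(* The sites m = -1 (mod l) carry the unrestricted counts a_{n,m}
   and cut the half-line into blocks of l - 1 sites; a reflection argument gives
   b_{n,(j+1)l+r} + b_{n,jl+s} = a_{n,jl+s} whenever r + s = l - 2.  Summing over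
   all sites, 2 b_n = A_n + E_n + K_n with A_n = sum_m a_{n,m},
   E_n = sum_{m = -1 (mod l)} a_{n,m} and K_n = sum_{m < l-1} b_{n,m}.

   A_n is a central binomial coefficient, and Wallis' integrals give
   A_n = a_n^a (1 + O(1/n)).  Detecting m + 1 = 0 (mod l) with the characters
   y |-> cos(2 pi k y / l), which are eigenvectors of the step operator, turns
   l E_n into a sum of weighted path sums: k = 0 contributes A_n, k = l/2 (l even)
   contributes (-1)^(n+1) A_n, and every other character has an eigenvalue of
   modulus at most lambda = 2 cos(pi / l) < 2, leaving an error of at most
   X_n = lambda^n + sum_{i<n} lambda^(n-1-i) a_{i,0}.  The Dirichlet eigenvector
   sin(pi (r+1) / l) of the strip 0 <= r <= l - 2 gives K_n <= lambda^n <= X_n.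
   As a_{i,0} = O(2^i i^(-3/2)), also X_n = O(2^n n^(-3/2)), hence
   b_n = (A_n + E_n + K_n) / 2 = b_n^a + O(2^n n^(-3/2)). *)

Definition apath_left (n m : nat) : nat :=
  match m with O => 0%nat | S m' => apath n m' end.

Definition bpath_left (l n m : nat) : nat :=
  match m with O => 0%nat | S m' => bpath l n m' end.

Lemma apath_S n m : apath (S n) m = (apath_left n m + apath n (S m))%nat.
Proof. reflexivity. Qed.

Lemma apath_gt n m : (n < m)%nat -> apath n m = 0%nat.
Proof.
  revert m; induction n as [|n IH]; intros m Hm; simpl.
  - destruct m; [lia | reflexivity].
  - destruct m as [|m]; [lia |]. rewrite !IH by lia. reflexivity.
Qed.

Lemma apath_odd n m k : (n + m = 2 * k + 1)%nat -> apath n m = 0%nat.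
Proof.
  revert m k; induction n as [|n IH]; intros m k Hnm.
  - simpl. destruct m; [lia | reflexivity].
  - rewrite apath_S. destruct m as [|m]; simpl apath_left.
    + rewrite (IH 1%nat k) by lia. reflexivity.
    + destruct k as [|k]; [lia |].
      rewrite (IH m k), (IH (S (S m)) (S k)) by lia. reflexivity.
Qed.

Lemma bpath_gt l n m : (n < m)%nat -> bpath l n m = 0%nat.
Proof.
  revert m; induction n as [|n IH]; intros m Hm; simpl.
  - destruct m; [lia | reflexivity].
  - destruct m as [|m]; [lia |].
    rewrite (apath_gt n m), (apath_gt n (S (S m))), !IH by lia.
    destruct (_ =? _)%nat; [reflexivity |]. destruct (_ =? _)%nat; reflexivity.
Qed.

Lemma bpath_mod_pred l n m : (m mod l = l - 1)%nat -> bpath l n m = apath n m.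
Proof. intros Hm. destruct n; simpl; [reflexivity |]. now rewrite Hm, Nat.eqb_refl. Qed.

Lemma bpath_S_mod_pred2 l n m : (2 <= l)%nat -> (m mod l = l - 2)%nat ->
  bpath l (S n) m = bpath_left l n m.
Proof.
  intros Hl Hm. simpl. rewrite Hm, Nat.eqb_refl.
  replace (l - 2 =? l - 1)%nat with false by (symmetry; apply Nat.eqb_neq; lia).
  reflexivity.
Qed.

Lemma bpath_S_generic l n m : (m mod l <> l - 1)%nat -> (m mod l <> l - 2)%nat ->
  bpath l (S n) m = (bpath_left l n m + bpath l n (S m))%nat.
Proof.
  intros H1 H2. simpl.
  rewrite (proj2 (Nat.eqb_neq _ _) H1), (proj2 (Nat.eqb_neq _ _) H2). reflexivity.
Qed.

Lemma mod_block l j r : (r < l)%nat -> ((j * l + r) mod l = r)%nat.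
Proof. intros Hr. rewrite Nat.add_comm, Nat.Div0.mod_add. now apply Nat.mod_small. Qed.

Lemma mod_pred_of_succ l m : (1 <= l)%nat -> (S m mod l = 0)%nat -> (m mod l = l - 1)%nat.
Proof.
  intros Hl Hm. pose proof (Nat.div_mod_eq m l). pose proof (Nat.mod_upper_bound m l ltac:(lia)).
  destruct (Nat.eq_dec (m mod l) (l - 1)) as [E | E]; [exact E | exfalso].
  replace (S m) with (m / l * l + S (m mod l))%nat in Hm by lia.
  rewrite mod_block in Hm; lia.
Qed.

Lemma succ_mod_eqb0 l m : (1 <= l)%nat -> (S m mod l =? 0)%nat = (m mod l =? l - 1)%nat.
Proof.
  intros Hl. destruct (Nat.eqb_spec (m mod l) (l - 1)) as [E | E].
  - apply Nat.eqb_eq. pose proof (Nat.div_mod_eq m l).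
    replace (S m) with (S (m / l) * l + 0)%nat by (simpl; nia). apply mod_block. lia.
  - apply Nat.eqb_neq. intros H. apply E, mod_pred_of_succ; assumption.
Qed.

Lemma bpath_left_mod0 l n m : (1 <= l)%nat -> (m mod l = 0)%nat ->
  bpath_left l n m = apath_left n m.
Proof.
  intros Hl Hm. destruct m as [|m]; [reflexivity |].
  apply bpath_mod_pred, mod_pred_of_succ; assumption.
Qed.

(* The sites (j+1)l + r and jl + s are mirror images across (j+1)l - 1, where
   b agrees with a. *)
Lemma bpath_mirror l n j r s : (2 <= l)%nat -> (r + s + 2 = l)%nat ->
  (bpath l n (S j * l + r) + bpath l n (j * l + s))%nat = apath n (j * l + s).
Proof.
  intros Hl; revert j r s; induction n as [|n IH]; intros j r s Hrs.
  { rewrite (bpath_gt l 0 (S j * l + r)) by (simpl; lia). reflexivity. }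
  assert (HM : ((S j * l + r) mod l = r)%nat) by (apply mod_block; lia).
  assert (HM' : ((j * l + s) mod l = s)%nat) by (apply mod_block; lia).
  rewrite apath_S.
  (* For r = 0 (resp. s = 0) the left neighbour lies on a site -1 (mod l). *)
  destruct r as [|r]; destruct s as [|s].
  - rewrite !bpath_S_mod_pred2 by (rewrite ?HM, ?HM'; lia).
    rewrite !bpath_left_mod0 by (rewrite ?HM, ?HM'; lia).
    replace (S j * l + 0)%nat with (S (S (j * l + 0))) by (simpl; lia).
    cbn [apath_left]. lia.
  - rewrite bpath_S_generic by (rewrite ?HM; lia).
    rewrite bpath_S_mod_pred2 by (rewrite ?HM'; lia).
    rewrite bpath_left_mod0 by (rewrite ?HM; lia).
    replace (S j * l + 0)%nat with (S (S (j * l + S s))) by (simpl; lia).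
    replace (j * l + S s)%nat with (S (j * l + s)) by lia.
    pose proof (IH j 1%nat s ltac:(lia)) as I.
    replace (S j * l + 1)%nat with (S (S (S (S (j * l + s))))) in I by (simpl; lia).
    cbn [apath_left bpath_left]. lia.
  - rewrite bpath_S_mod_pred2 by (rewrite ?HM; lia).
    rewrite bpath_S_generic by (rewrite ?HM'; lia).
    rewrite (bpath_left_mod0 l n (j * l + 0)) by (rewrite ?HM'; lia).
    replace (S j * l + S r)%nat with (S (S j * l + r)) by lia.
    pose proof (IH j r 1%nat ltac:(lia)) as I.
    replace (j * l + 1)%nat with (S (j * l + 0)) in I by lia.
    cbn [bpath_left]. lia.
  - rewrite !bpath_S_generic by (rewrite ?HM, ?HM'; lia).
    replace (S j * l + S r)%nat with (S (S j * l + r)) by lia.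
    replace (j * l + S s)%nat with (S (j * l + s)) by lia.
    pose proof (IH j r (S (S s)) ltac:(lia)) as I1.
    pose proof (IH j (S (S r)) s ltac:(lia)) as I2.
    replace (j * l + S (S s))%nat with (S (S (j * l + s))) in I1 by lia.
    replace (S j * l + S (S r))%nat with (S (S (S j * l + r))) in I2 by lia.
    cbn [apath_left bpath_left]. lia.
Qed.

(* Sums over i < k, so that the empty sum is available (Stdlib's sum_f_R0 f k
   has k + 1 terms). *)
Fixpoint rsum (f : nat -> R) (k : nat) : R :=
  match k with O => 0 | S k => rsum f k + f k end.

Lemma rsum_ext f g k : (forall i, (i < k)%nat -> f i = g i) -> rsum f k = rsum g k.
Proof. induction k; intros H; simpl; [reflexivity |]. rewrite IHk, H; auto. Qed.

Lemma rsum_shift f k : rsum f (S k) = f 0%nat + rsum (fun i => f (S i)) k.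
Proof. induction k; simpl in *; lra. Qed.

Lemma rsum_app f a b : rsum f (a + b) = rsum f a + rsum (fun i => f (a + i)%nat) b.
Proof. induction b; simpl; rewrite ?Nat.add_0_r, ?Nat.add_succ_r; simpl; lra. Qed.

Lemma rsum_plus f g k : rsum (fun i => f i + g i) k = rsum f k + rsum g k.
Proof. induction k; simpl; lra. Qed.

Lemma rsum_minus f g k : rsum (fun i => f i - g i) k = rsum f k - rsum g k.
Proof. induction k; simpl; lra. Qed.

Lemma rsum_scal c f k : rsum (fun i => c * f i) k = c * rsum f k.
Proof. induction k; simpl; lra. Qed.

Lemma rsum_const c k : rsum (fun _ => c) k = INR k * c.
Proof. induction k; simpl rsum; [simpl; lra |]. rewrite S_INR. lra. Qed.

Lemma rsum_eq0 f k : (forall i, (i < k)%nat -> f i = 0) -> rsum f k = 0.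
Proof. intros H. rewrite (rsum_ext f (fun _ => 0)) by auto. rewrite rsum_const. ring. Qed.

Lemma rsum_le f g k : (forall i, (i < k)%nat -> f i <= g i) -> rsum f k <= rsum g k.
Proof. induction k; intros H; simpl; [lra |]. apply Rplus_le_compat; auto. Qed.

Lemma rsum_abs f g k :
  (forall i, (i < k)%nat -> Rabs (f i) <= g i) -> Rabs (rsum f k) <= rsum g k.
Proof.
  induction k; intros H; simpl; [rewrite Rabs_R0; lra |].
  eapply Rle_trans; [apply Rabs_triang | apply Rplus_le_compat; auto].
Qed.

Lemma rsum_swap (f : nat -> nat -> R) a b :
  rsum (fun i => rsum (fun j => f i j) b) a = rsum (fun j => rsum (fun i => f i j) a) b.
Proof.
  induction a; simpl; [symmetry; apply rsum_eq0; reflexivity |].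
  rewrite IHa, <- rsum_plus. reflexivity.
Qed.

Lemma rsum_rev f k : rsum f k = rsum (fun i => f (k - 1 - i)%nat) k.
Proof.
  induction k; [reflexivity |].
  transitivity (rsum f k + f k); [reflexivity |].
  rewrite rsum_shift, IHk. replace (S k - 1 - 0)%nat with k by lia.
  rewrite Rplus_comm. f_equal. apply rsum_ext. intros i Hi. f_equal. lia.
Qed.

Lemma rsum_vanish f k K : (k <= K)%nat -> (forall i, (k <= i)%nat -> f i = 0) ->
  rsum f K = rsum f k.
Proof.
  intros HK H. replace K with (k + (K - k))%nat by lia.
  rewrite rsum_app, (rsum_eq0 _ (K - k)); [lra |]. intros i _. apply H. lia.
Qed.

Lemma rsum_blocks f l J : (1 <= l)%nat ->
  rsum f (J * l) =
  rsum (fun j => rsum (fun r => f (j * l + r)%nat) (l - 1) + f (j * l + (l - 1))%nat) J.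
Proof.
  intros Hl. induction J; [reflexivity |].
  replace (S J * l)%nat with (J * l + (l - 1) + 1)%nat by (simpl; lia).
  rewrite (rsum_app f (J * l + (l - 1)) 1), (rsum_app f (J * l) (l - 1)), IHJ.
  cbn [rsum]. rewrite Nat.add_0_r. lra.
Qed.

Lemma rsum_delta p c K :
  rsum (fun k => if (k =? p)%nat then c else 0) K = if (p <? K)%nat then c else 0.
Proof.
  induction K; [reflexivity |]. simpl rsum. rewrite IHK.
  destruct (Nat.ltb_spec p K), (Nat.ltb_spec p (S K)), (Nat.eqb_spec K p); try lia; lra.
Qed.

Lemma INR_fold_sum (f : nat -> nat) s k :
  INR (fold_right Nat.add 0%nat (map f (seq s k))) = rsum (fun i => INR (f (s + i)%nat)) k.
Proof.
  revert s; induction k; intros s; [reflexivity |].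
  cbn [seq map fold_right]. rewrite plus_INR, IHk, rsum_shift, Nat.add_0_r.
  f_equal. apply rsum_ext. intros i _. do 2 f_equal. lia.
Qed.

(** * The decomposition 2 b_n = A_n + E_n + K_n *)

Definition asum (n : nat) : R := rsum (fun m => INR (apath n m)) (S n).

Definition asum_mod (l n : nat) : R :=
  rsum (fun m => if (m mod l =? l - 1)%nat then INR (apath n m) else 0) (S n).

Definition bsum_head (l n : nat) : R := rsum (fun m => INR (bpath l n m)) (l - 1).

Lemma INR_bsum l n : INR (bsum l n) = rsum (fun m => INR (bpath l n m)) (S n).
Proof. apply INR_fold_sum. Qed.

Lemma rsum_pair_telescope (beta alpha : nat -> R) J :
  (forall j, beta j + beta (S j) = alpha j) ->
  2 * rsum beta J + beta J = beta 0%nat + rsum alpha J.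
Proof. intros H. induction J; simpl; [lra |]. specialize (H J). lra. Qed.

Section Decomposition.

Variables l n : nat.
Hypothesis Hl : (2 <= l)%nat.

Let J := S n.
Let beta j := rsum (fun r => INR (bpath l n (j * l + r))) (l - 1).
Let alpha j := rsum (fun r => INR (apath n (j * l + r))) (l - 1).
Let top j := INR (apath n (j * l + (l - 1))).

Lemma sum_to_blocks (f : nat -> R) : (forall m, (n < m)%nat -> f m = 0) ->
  rsum f (S n) = rsum f (J * l).
Proof. intros H. symmetry. apply rsum_vanish; [unfold J; simpl; nia | intros; apply H; lia]. Qed.

Lemma bsum_blocks : INR (bsum l n) = rsum beta J + rsum top J.
Proof.
  rewrite INR_bsum, sum_to_blocks by (intros; rewrite bpath_gt; auto).
  rewrite rsum_blocks, <- rsum_plus by lia. apply rsum_ext. intros j _.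
  unfold top. rewrite bpath_mod_pred by (apply mod_block; lia). reflexivity.
Qed.

Lemma asum_blocks : asum n = rsum alpha J + rsum top J.
Proof.
  unfold asum. rewrite sum_to_blocks by (intros; rewrite apath_gt; auto).
  rewrite rsum_blocks, <- rsum_plus by lia. reflexivity.
Qed.

Lemma asum_mod_blocks : asum_mod l n = rsum top J.
Proof.
  unfold asum_mod.
  rewrite sum_to_blocks by (intros; destruct (_ =? _)%nat; rewrite ?apath_gt; auto).
  rewrite rsum_blocks by lia. apply rsum_ext. intros j _.
  rewrite mod_block, Nat.eqb_refl by lia.
  rewrite rsum_eq0; [unfold top; lra |]. intros r Hr. rewrite mod_block by lia.
  replace (r =? l - 1)%nat with false by (symmetry; apply Nat.eqb_neq; lia). reflexivity.
Qed.

Lemma beta_mirror j : beta j + beta (S j) = alpha j.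
Proof.
  unfold beta, alpha.
  rewrite (rsum_rev (fun r => INR (bpath l n (S j * l + r)))), Rplus_comm, <- rsum_plus.
  apply rsum_ext. intros s Hs. rewrite <- plus_INR. f_equal.
  replace (l - 1 - 1 - s)%nat with (l - 2 - s)%nat by lia. apply bpath_mirror; lia.
Qed.

Lemma beta_last : beta J = 0.
Proof. apply rsum_eq0. intros r _. rewrite bpath_gt; [reflexivity | unfold J; simpl; nia]. Qed.

Theorem bsum_decomposition : 2 * INR (bsum l n) = asum n + asum_mod l n + bsum_head l n.
Proof.
  pose proof (rsum_pair_telescope beta alpha J beta_mirror) as T.
  rewrite beta_last in T.
  rewrite bsum_blocks, asum_blocks, asum_mod_blocks.
  replace (bsum_head l n) with (beta 0%nat) by reflexivity. lra.
Qed.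

End Decomposition.

Definition wsum (g : nat -> R) (n : nat) : R :=
  rsum (fun m => INR (apath n m) * g (S m)) (S n).

Lemma wsum_step g n :
  wsum g (S n) =
  rsum (fun m => INR (apath n m) * (g m + g (S (S m)))) (S n) - INR (apath n 0) * g 0%nat.
Proof.
  unfold wsum.
  rewrite (rsum_ext _ (fun m => INR (apath_left n m) * g (S m) + INR (apath n (S m)) * g (S m)))
    by (intros; rewrite apath_S, plus_INR; ring).
  rewrite rsum_plus, rsum_shift.
  rewrite (rsum_ext (fun m => INR (apath n m) * (g m + g (S (S m))))
             (fun m => INR (apath n m) * g m + INR (apath n m) * g (S (S m)))) by (intros; ring).
  rewrite rsum_plus, (rsum_shift (fun m => INR (apath n m) * g m)).
  assert (Hgt : forall K, (n <= K)%nat ->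
            rsum (fun m => INR (apath n (S m)) * g (S m)) K =
            rsum (fun m => INR (apath n (S m)) * g (S m)) n).
  { intros K HK. apply rsum_vanish; [exact HK |]. intros i Hi.
    rewrite apath_gt by lia. simpl. ring. }
  rewrite !Hgt by lia. cbn [apath_left INR]. lra.
Qed.

Lemma wsum_eigen g mu : (forall m, g m + g (S (S m)) = mu * g (S m)) ->
  forall n, wsum g (S n) = mu * wsum g n - INR (apath n 0) * g 0%nat.
Proof.
  intros Hg n. rewrite wsum_step. unfold wsum. rewrite <- rsum_scal.
  f_equal. apply rsum_ext. intros m _. rewrite Hg. ring.
Qed.

Lemma asum_wsum n : asum n = wsum (fun _ => 1) n.
Proof. apply rsum_ext. intros; ring. Qed.

Lemma asum_S n : asum (S n) = 2 * asum n - INR (apath n 0).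
Proof.
  rewrite !asum_wsum, (wsum_eigen (fun _ => 1) 2) by (intros; ring). ring.
Qed.

(** * Central binomial coefficients and Wallis integrals *)

(* Nat-valued and vanishing for k > n, unlike Stdlib's real-valued [C]. *)
Fixpoint binom (n k : nat) : nat :=
  match n, k with
  | _, O => 1%nat
  | O, S _ => 0%nat
  | S n', S k' => (binom n' k' + binom n' (S k'))%nat
  end.

Definition binom_prev (n k : nat) : nat :=
  match k with O => 0%nat | S k' => binom n k' end.

Lemma binom_S n k : binom (S n) k = (binom n k + binom_prev n k)%nat.
Proof. destruct n, k; simpl; lia. Qed.

Lemma binom_gt n k : (n < k)%nat -> binom n k = 0%nat.
Proof.
  revert k; induction n; intros [|k] H; simpl; try lia.
  rewrite !IHn by lia. reflexivity.
Qed.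

Lemma binom_diag n : binom n n = 1%nat.
Proof. induction n; simpl; [reflexivity |]. rewrite IHn, binom_gt by lia. reflexivity. Qed.

Lemma binom_sym N a b : (a + b = N)%nat -> binom N a = binom N b.
Proof.
  revert a b; induction N; intros a b H.
  - replace a with 0%nat by lia. replace b with 0%nat by lia. reflexivity.
  - destruct a as [|a], b as [|b]; try lia.
    + replace b with N by lia. now rewrite binom_diag.
    + replace a with N by lia. now rewrite binom_diag.
    + simpl. rewrite (IHN a (S b)), (IHN (S a) b) by lia. lia.
Qed.

Lemma binom_absorb n k : (S k * binom (S n) (S k) = S n * binom n k)%nat.
Proof.
  revert k; induction n; intros k.
  - destruct k; simpl; lia.
  - change (binom (S (S n)) (S k)) with (binom (S n) k + binom (S n) (S k))%nat.
    destruct k as [|k].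
    + assert (E : binom (S n) 1 = S n).
      { clear IHn. induction n; [reflexivity |]. simpl in *. lia. }
      rewrite E. simpl. lia.
    + pose proof (IHn k). pose proof (IHn (S k)).
      change (binom (S n) (S k)) with (binom n k + binom n (S k))%nat in *. nia.
Qed.

Lemma apath_ballot n m i : n = (m + 2 * i)%nat ->
  (apath n m + binom_prev n i = binom n i)%nat.
Proof.
  revert m i; induction n as [|n IH]; intros m i H.
  - replace m with 0%nat by lia. replace i with 0%nat by lia. reflexivity.
  - rewrite apath_S, binom_S. destruct i as [|i], m as [|m]; try lia.
    + replace m with n by lia. cbn [apath_left binom_prev binom].
      rewrite (apath_gt n (S (S n))) by lia.
      pose proof (IH n 0%nat ltac:(lia)). cbn [binom_prev binom] in *. lia.
    + cbn [apath_left binom_prev].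
      pose proof (IH 1%nat i ltac:(lia)).
      assert (binom n i = binom n (S i)) by (apply binom_sym; lia).
      rewrite binom_S. cbn [binom_prev] in *. lia.
    + cbn [apath_left binom_prev] in *.
      pose proof (IH m (S i) ltac:(lia)). pose proof (IH (S (S m)) i ltac:(lia)).
      rewrite binom_S. cbn [binom_prev] in *. lia.
Qed.

Lemma asum_closed k :
  asum (2 * k) = INR (binom (2 * k) k) /\ asum (2 * k + 1) = INR (binom (2 * k + 1) k).
Proof.
  induction k as [|k [IH0 IH1]]; [split; unfold asum; simpl; lra |].
  assert (E0 : asum (2 * S k) = INR (binom (2 * S k) (S k))).
  { replace (2 * S k)%nat with (S (2 * k + 1)) by lia.
    rewrite asum_S, IH1, (apath_odd _ 0 k) by lia.
    rewrite binom_S, plus_INR. cbn [binom_prev].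
    rewrite (binom_sym (2 * k + 1) (S k) k) by lia. simpl INR. lra. }
  split; [exact E0 |].
  replace (2 * S k + 1)%nat with (S (2 * S k)) by lia.
  pose proof (apath_ballot (2 * S k) 0 (S k) ltac:(lia)) as B.
  rewrite asum_S, E0, binom_S. apply (f_equal INR) in B. rewrite !plus_INR in *. lra.
Qed.

Definition central (k : nat) : R := INR (binom (2 * k) k) / 4 ^ k.

Lemma central_0 : central 0 = 1.
Proof. unfold central. simpl. field. Qed.

Lemma binom_central_S k : (S k * binom (2 * S k) (S k) = 2 * (2 * k + 1) * binom (2 * k) k)%nat.
Proof.
  pose proof (binom_absorb (2 * k + 1) k) as A1.
  pose proof (binom_absorb (2 * k) k) as A0.
  replace (S (2 * k + 1)) with (2 * S k)%nat in A1 by lia.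
  replace (S (2 * k)) with (2 * k + 1)%nat in A0 by lia.
  rewrite (binom_sym (2 * k + 1) (S k) k) in A0 by lia.
  assert (binom (2 * S k) (S k) = 2 * binom (2 * k + 1) k)%nat as E.
  { apply (Nat.mul_cancel_l _ _ (S k)); lia. }
  lia.
Qed.

Lemma central_S k : central (S k) = central k * (2 * INR k + 1) / (2 * INR k + 2).
Proof.
  pose proof (binom_central_S k) as E. apply (f_equal INR) in E.
  rewrite !mult_INR, plus_INR, mult_INR, S_INR in E. change (INR 2) with (1 + 1) in E.
  unfold central. simpl pow. pose proof (pos_INR k).
  assert (0 < 4 ^ k) by (apply pow_lt; lra).
  replace (INR (binom (2 * S k) (S k)))
    with (2 * (2 * INR k + 1) * INR (binom (2 * k) k) / (INR k + 1)).
  - field. lra.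
  - apply (Rmult_eq_reg_l (INR k + 1)); [rewrite E; simpl INR; field | ]; lra.
Qed.

Lemma central_pos k : 0 < central k.
Proof.
  induction k; [rewrite central_0; lra |]. rewrite central_S. pose proof (pos_INR k).
  apply Rdiv_lt_0_compat; nra.
Qed.

Lemma asum_even_scaled k : asum (2 * k) / 2 ^ (2 * k) = central k.
Proof. rewrite (proj1 (asum_closed k)), pow_mult. unfold central. do 2 f_equal. ring. Qed.

Lemma asum_odd_scaled k : asum (2 * k + 1) / 2 ^ (2 * k + 1) = central (S k).
Proof.
  rewrite (proj2 (asum_closed k)). unfold central.
  replace (2 * S k)%nat with (S (2 * k + 1)) by lia.
  rewrite binom_S. cbn [binom_prev]. rewrite (binom_sym (2 * k + 1) (S k) k) by lia.
  rewrite plus_INR, pow_add, pow_mult. replace (2 ^ 2) with 4 by ring. simpl pow.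
  assert (0 < 4 ^ k) by (apply pow_lt; lra). field. lra.
Qed.

Definition wallis (n : nat) : R := RInt (fun x => sin x ^ n) 0 (PI / 2).

Lemma ex_RInt_sin_pow n a b : ex_RInt (fun x => sin x ^ n) a b.
Proof.
  apply (@ex_RInt_continuous R_CompleteNormedModule). intros z _.
  apply (ex_derive_continuous (fun x => sin x ^ n)). auto_derive. auto.
Qed.

Lemma wallis_0 : wallis 0 = PI / 2.
Proof. unfold wallis. simpl. rewrite RInt_const. unfold scal; simpl. unfold mult; simpl. ring. Qed.

Lemma wallis_1 : wallis 1 = 1.
Proof.
  unfold wallis. rewrite (RInt_ext _ sin) by (intros; simpl; ring).
  rewrite (is_RInt_unique sin 0 (PI / 2) (minus (- cos (PI / 2)) (- cos 0))).
  - rewrite cos_PI2, cos_0. unfold minus, plus, opp; simpl. ring.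
  - apply (is_RInt_derive (fun x => - cos x) sin).
    + intros x _. auto_derive; auto. ring.
    + intros x _. apply continuity_pt_filterlim, continuity_sin.
Qed.

(* Integration by parts against d(-cos x) = sin x dx. *)
Lemma wallis_SS n : INR (S (S n)) * wallis (S (S n)) = INR (S n) * wallis n.
Proof.
  set (f := fun x => - cos x * sin x ^ S n).
  set (df := fun x => INR (S (S n)) * sin x ^ S (S n) - INR (S n) * sin x ^ n).
  assert (H : is_RInt df 0 (PI / 2) (minus (f (PI / 2)) (f 0))).
  { apply (@is_RInt_derive R_CompleteNormedModule f df).
    - intros x _. unfold f, df. auto_derive; auto.
      replace (match n with 0%nat => 1 | S _ => INR n + 1 end) with (INR (S n))
        by (destruct n; reflexivity).
      rewrite (S_INR (S n)). pose proof (sin2_cos2 x) as E. unfold Rsqr in E.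
      replace (sin x ^ S (S n)) with (sin x * (sin x * sin x ^ n)) by reflexivity.
      match goal with
      | |- ?L = ?R =>
          assert (L - R = - INR (S n) * sin x ^ n * (sin x * sin x + cos x * cos x - 1)) by ring
      end.
      rewrite E in H. lra.
    - intros x _. unfold df. apply (ex_derive_continuous df). unfold df. auto_derive. auto. }
  replace (minus (f (PI / 2)) (f 0)) with 0 in H
    by (unfold f; rewrite cos_PI2, sin_0; unfold minus, plus, opp; simpl; ring).
  apply (@is_RInt_unique R_CompleteNormedModule) in H. unfold df in H.
  rewrite (RInt_ext _ (fun x => minus (scal (INR (S (S n))) (sin x ^ S (S n)))
                                      (scal (INR (S n)) (sin x ^ n)))) in H
    by (intros; reflexivity).
  rewrite (@RInt_minus R_CompleteNormedModule) in H
    by (apply (@ex_RInt_scal R_CompleteNormedModule); apply ex_RInt_sin_pow).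
  rewrite (@RInt_scal R_CompleteNormedModule (fun x => sin x ^ S (S n))) in H
    by apply ex_RInt_sin_pow.
  rewrite (@RInt_scal R_CompleteNormedModule (fun x => sin x ^ n)) in H
    by apply ex_RInt_sin_pow.
  change (INR (S (S n)) * wallis (S (S n)) - INR (S n) * wallis n = 0) in H. lra.
Qed.

Lemma wallis_S_le n : wallis (S n) <= wallis n.
Proof.
  unfold wallis. apply RInt_le; [pose proof PI_RGT_0; lra | apply ex_RInt_sin_pow.. |].
  intros x Hx. simpl. pose proof (sin_ge_0 x ltac:(lra) ltac:(lra)).
  pose proof (SIN_bound x). pose proof (pow_le (sin x) n). nra.
Qed.

Lemma wallis_even k : wallis (2 * k) = PI / 2 * central k.
Proof.
  induction k; [change (2 * 0)%nat with 0%nat; rewrite central_0, wallis_0; ring |].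
  pose proof (wallis_SS (2 * k)) as H. rewrite !S_INR, mult_INR in H. change (INR 2) with 2 in H.
  replace (2 * S k)%nat with (S (S (2 * k))) by lia.
  rewrite central_S. pose proof (pos_INR k).
  apply (Rmult_eq_reg_l (2 * INR k + 1 + 1)); [| lra]. rewrite H, IHk. field. lra.
Qed.

Lemma wallis_odd k : wallis (2 * k + 1) = / ((2 * INR k + 1) * central k).
Proof.
  induction k; [change (2 * 0 + 1)%nat with 1%nat; rewrite central_0, wallis_1; simpl; field |].
  pose proof (wallis_SS (2 * k + 1)) as H. rewrite !S_INR, plus_INR, mult_INR in H.
  change (INR 2) with 2 in H. change (INR 1) with 1 in H.
  replace (2 * S k + 1)%nat with (S (S (2 * k + 1))) by lia.
  rewrite S_INR, central_S. pose proof (pos_INR k). pose proof (central_pos k).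
  apply (Rmult_eq_reg_l (2 * INR k + 1 + 1 + 1)); [| lra]. rewrite H, IHk. field.
  split; lra.
Qed.

Lemma central_sandwich k :
  PI * (2 * INR k + 1) * (central k * central (S k)) <= 2 <=
  PI * (2 * INR k + 1) * central k ^ 2.
Proof.
  pose proof (wallis_S_le (2 * k)) as L0. pose proof (wallis_S_le (2 * k + 1)) as L1.
  replace (S (2 * k)) with (2 * k + 1)%nat in L0 by lia.
  replace (S (2 * k + 1)) with (2 * S k)%nat in L1 by lia.
  rewrite wallis_odd, wallis_even in L0, L1.
  pose proof (central_pos k). pose proof (central_pos (S k)). pose proof (pos_INR k).
  set (q := 2 * INR k + 1) in *. set (c := central k) in *.
  assert (Hqc : 0 < q * c) by (unfold q; nra).
  apply (Rmult_le_compat_r (q * c)) in L0, L1; try lra.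
  rewrite Rinv_l in L0, L1 by lra. split; nra.
Qed.

Lemma central_S_le k : central (S k) <= central k.
Proof.
  rewrite central_S. pose proof (central_pos k). pose proof (pos_INR k).
  apply (Rmult_le_reg_r (2 * INR k + 2)); [lra |]. field_simplify; nra.
Qed.

Lemma central_sq_le k : PI * (2 * INR k + 1) ^ 2 * central k ^ 2 <= 2 * (2 * INR k + 2).
Proof.
  pose proof (proj1 (central_sandwich k)) as H. rewrite central_S in H.
  pose proof (pos_INR k).
  apply (Rmult_le_compat_r (2 * INR k + 2)) in H; [| lra].
  replace (PI * (2 * INR k + 1) * (central k * (central k * (2 * INR k + 1) / (2 * INR k + 2)))
             * (2 * INR k + 2))
    with (PI * (2 * INR k + 1) ^ 2 * central k ^ 2) in H by (field; lra).
  exact H.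
Qed.

Lemma asum_scaled_sq_bounds n : (1 <= n)%nat ->
  2 * (INR n - 2) <= PI * INR n ^ 2 * (asum n / 2 ^ n) ^ 2 /\
  PI * INR n * (asum n / 2 ^ n) ^ 2 <= 2.
Proof.
  intros Hn. pose proof PI_RGT_0.
  destruct (Nat.Even_or_Odd n) as [[k ->] | [k ->]].
  - rewrite asum_even_scaled, mult_INR. change (INR 2) with 2.
    pose proof (proj2 (central_sandwich k)) as L. pose proof (central_sq_le k) as U.
    assert (HK : 1 <= INR k) by (apply (le_INR 1); lia).
    set (c := central k) in *. set (K := INR k) in *.
    assert (0 <= PI * c ^ 2) by (apply Rmult_le_pos; [lra | apply pow2_ge_0]).
    split; nra.
  - rewrite asum_odd_scaled, plus_INR, mult_INR. change (INR 2) with 2. change (INR 1) with 1.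
    pose proof (proj2 (central_sandwich (S k))) as L. pose proof (proj1 (central_sandwich k)) as U.
    pose proof (central_S_le k). pose proof (central_pos (S k)). rewrite S_INR in L.
    pose proof (pos_INR k).
    set (c := central k) in *. set (c' := central (S k)) in *. set (K := INR k) in *.
    assert (0 <= PI * c' ^ 2) by (apply Rmult_le_pos; [lra | apply pow2_ge_0]).
    split; nra.
Qed.

Lemma rel_error_of_sq_bounds x y e : 0 <= x -> 0 < y -> 0 <= e ->
  (1 - e) * y ^ 2 <= x ^ 2 <= y ^ 2 -> Rabs (x - y) <= e * y.
Proof.
  intros Hx Hy He [Hlo Hhi].
  assert (Hxy : x <= y) by nra.
  rewrite Rabs_left1 by lra. nra.
Qed.

Lemma a_asym_scaled_sq n : (1 <= n)%nat -> PI * INR n * (a_asym n / 2 ^ n) ^ 2 = 2.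
Proof.
  intros Hn. pose proof PI_RGT_0. assert (0 < INR n) by (apply lt_0_INR; lia).
  assert (0 < 2 ^ n) by (apply pow_lt; lra).
  assert (0 < sqrt (INR n)) by (apply sqrt_lt_R0; lra).
  unfold a_asym.
  replace ((sqrt (2 / PI) * / sqrt (INR n) * 2 ^ n / 2 ^ n) ^ 2)
    with (sqrt (2 / PI) * sqrt (2 / PI) / (sqrt (INR n) * sqrt (INR n))) by (field; lra).
  rewrite !sqrt_sqrt; [field; lra | lra | apply Rlt_le, Rdiv_lt_0_compat; lra].
Qed.

Lemma a_asym_pos n : (1 <= n)%nat -> 0 < a_asym n.
Proof.
  intros Hn. pose proof PI_RGT_0. assert (0 < INR n) by (apply lt_0_INR; lia).
  unfold a_asym. repeat apply Rmult_lt_0_compat.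
  - apply sqrt_lt_R0, Rdiv_lt_0_compat; lra.
  - apply Rinv_0_lt_compat, sqrt_lt_R0. lra.
  - apply pow_lt. lra.
Qed.

Lemma asum_nonneg n : 0 <= asum n.
Proof.
  unfold asum. rewrite <- (rsum_eq0 (fun _ => 0) (S n)) by reflexivity.
  apply rsum_le. intros; apply pos_INR.
Qed.

Theorem asum_asymptotic n : (1 <= n)%nat -> Rabs (asum n - a_asym n) <= 2 / INR n * a_asym n.
Proof.
  intros Hn. pose proof PI_RGT_0. assert (HnR : 1 <= INR n) by (apply (le_INR 1); lia).
  assert (Hp : 0 < 2 ^ n) by (apply pow_lt; lra).
  pose proof (a_asym_pos n Hn). pose proof (asum_nonneg n).
  pose proof (a_asym_scaled_sq n Hn) as Ha. pose proof (asum_scaled_sq_bounds n Hn) as [Hlo Hhi].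
  replace (asum n - a_asym n) with ((asum n / 2 ^ n - a_asym n / 2 ^ n) * 2 ^ n) by (field; lra).
  rewrite Rabs_mult, (Rabs_right (2 ^ n)) by lra.
  replace (2 / INR n * a_asym n) with (2 / INR n * (a_asym n / 2 ^ n) * 2 ^ n) by (field; lra).
  apply Rmult_le_compat_r; [lra |].
  apply rel_error_of_sq_bounds.
  - apply Rmult_le_pos; [lra | left; apply Rinv_0_lt_compat; lra].
  - apply Rdiv_lt_0_compat; lra.
  - apply Rmult_le_pos; [lra | left; apply Rinv_0_lt_compat; lra].
  - set (x2 := (asum n / 2 ^ n) ^ 2) in *. set (y2 := (a_asym n / 2 ^ n) ^ 2) in *.
    split.
    + apply (Rmult_le_reg_l (PI * INR n ^ 2)); [apply Rmult_lt_0_compat, pow_lt; lra |].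
      replace (PI * INR n ^ 2 * ((1 - 2 / INR n) * y2)) with ((INR n - 2) * (PI * INR n * y2))
        by (field; lra).
      rewrite Ha. lra.
    + apply (Rmult_le_reg_l (PI * INR n)); [apply Rmult_lt_0_compat; lra |]. lra.
Qed.

Lemma exists_bound_upto (f g : nat -> R) N : (forall n, 0 < g n) ->
  exists K, forall n, (n <= N)%nat -> f n <= K * g n.
Proof.
  intros Hg. induction N as [|N [K HK]].
  - exists (f 0%nat / g 0%nat). intros n Hn. replace n with 0%nat by lia.
    right. field. apply Rgt_not_eq, Hg.
  - exists (Rmax K (f (S N) / g (S N))). intros n Hn. pose proof (Hg n).
    destruct (Nat.eq_dec n (S N)) as [-> | Hne].
    + apply (Rle_trans _ (f (S N) / g (S N) * g (S N))); [right; field; lra |].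
      apply Rmult_le_compat_r; [lra | apply Rmax_r].
    + apply (Rle_trans _ (K * g n)); [apply HK; lia |].
      apply Rmult_le_compat_r; [lra | apply Rmax_l].
Qed.

(* If w decays more slowly than ((1 + rho) / 2)^n, the contraction rho loses
   against the forcing term c w n and Y inherits the decay of w. *)
Lemma damped_recursion_bound (w Y : nat -> R) rho c :
  (forall n, 0 < w n) -> 0 <= rho < 1 -> 0 <= c ->
  (exists N, forall n, (N <= n)%nat -> (1 + rho) * w n <= 2 * w (S n)) ->
  (forall n, Y (S n) <= rho * Y n + c * w n) ->
  exists K, forall n, Y n <= K * w n.
Proof.
  intros Hw Hrho Hc [N HN] HY.
  destruct (exists_bound_upto Y w N Hw) as [K0 HK0].
  set (K := Rmax (2 * c / (1 - rho)) K0).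
  assert (HcK : 2 * c <= (1 - rho) * K).
  { apply (Rle_trans _ ((1 - rho) * (2 * c / (1 - rho)))); [right; field; lra |].
    apply Rmult_le_compat_l; [lra | apply Rmax_l]. }
  exists K. induction n as [|n IH].
  - apply (Rle_trans _ (K0 * w 0%nat)); [apply HK0; lia |].
    apply Rmult_le_compat_r; [left; apply Hw | apply Rmax_r].
  - destruct (Nat.le_gt_cases (S n) N) as [Hle | Hgt].
    + apply (Rle_trans _ (K0 * w (S n))); [apply HK0; lia |].
      apply Rmult_le_compat_r; [left; apply Hw | apply Rmax_r].
    + assert (HK : 0 <= K).
      { apply (Rle_trans _ (2 * c / (1 - rho))); [| apply Rmax_l].
        apply Rmult_le_pos; [lra | left; apply Rinv_0_lt_compat; lra]. }
      pose proof (HN n ltac:(lia)). pose proof (Hw n).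
      apply (Rle_trans _ _ _ (HY n)).
      assert (rho * Y n <= rho * (K * w n)) by (apply Rmult_le_compat_l; lra).
      assert (2 * c * w n <= (1 - rho) * K * w n) by (apply Rmult_le_compat_r; lra).
      assert (K * ((1 + rho) * w n) <= K * (2 * w (S n))) by (apply Rmult_le_compat_l; lra).
      lra.
Qed.

Definition decay_weight (n : nat) : R := / ((INR n + 1) * sqrt (INR n + 1)).

Lemma decay_weight_pos n : 0 < decay_weight n.
Proof.
  pose proof (pos_INR n). apply Rinv_0_lt_compat, Rmult_lt_0_compat; [lra |].
  apply sqrt_lt_R0. lra.
Qed.

Lemma decay_weight_step n : decay_weight n <= (1 + 3 / (INR n + 1)) * decay_weight (S n).
Proof.
  unfold decay_weight. rewrite S_INR. pose proof (pos_INR n).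
  set (s := sqrt (INR n + 1)). set (t := sqrt (INR n + 1 + 1)).
  assert (Hs : 0 < s) by (apply sqrt_lt_R0; lra).
  assert (Ht : 0 < t) by (apply sqrt_lt_R0; lra).
  assert (Hs2 : s * s = INR n + 1) by (apply sqrt_sqrt; lra).
  assert (Ht2 : t * t = INR n + 1 + 1) by (apply sqrt_sqrt; lra).
  assert (Key : (INR n + 2) * t <= (INR n + 4) * s).
  { apply Rsqr_incr_0_var; [unfold Rsqr | nra].
    replace ((INR n + 2) * t * ((INR n + 2) * t)) with ((INR n + 2) ^ 2 * (t * t)) by ring.
    replace ((INR n + 4) * s * ((INR n + 4) * s)) with ((INR n + 4) ^ 2 * (s * s)) by ring.
    rewrite Hs2, Ht2. nra. }
  replace ((1 + 3 / (INR n + 1)) * / ((INR n + 1 + 1) * t))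
    with ((INR n + 4) / ((INR n + 1) * (INR n + 2) * t)) by (field; lra).
  apply (Rmult_le_reg_r ((INR n + 1) * s * ((INR n + 2) * t))); [apply Rmult_lt_0_compat; nra |].
  replace (/ ((INR n + 1) * s) * ((INR n + 1) * s * ((INR n + 2) * t)))
    with ((INR n + 2) * t) by (field; lra).
  replace ((INR n + 4) / ((INR n + 1) * (INR n + 2) * t) * ((INR n + 1) * s * ((INR n + 2) * t)))
    with ((INR n + 4) * s) by (field; lra).
  exact Key.
Qed.

Lemma decay_weight_slow rho : 0 <= rho < 1 ->
  exists N, forall n, (N <= n)%nat -> (1 + rho) * decay_weight n <= 2 * decay_weight (S n).
Proof.
  intros Hrho. destruct (INR_archimed 1 (3 * (1 + rho) / (1 - rho))) as [N HN]; [lra |].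
  exists N. intros n Hn. rewrite Rmult_1_r in HN.
  assert (HnR : INR N <= INR n) by (apply le_INR; lia). pose proof (pos_INR N).
  pose proof (decay_weight_step n). pose proof (decay_weight_pos (S n)).
  assert (H3 : (1 + rho) * (1 + 3 / (INR n + 1)) <= 2).
  { apply (Rmult_le_reg_r ((INR n + 1) * (1 - rho))); [nra |].
    replace ((1 + rho) * (1 + 3 / (INR n + 1)) * ((INR n + 1) * (1 - rho)))
      with ((1 + rho) * (INR n + 1) * (1 - rho) + 3 * (1 + rho) * (1 - rho)) by (field; lra).
    assert (3 * (1 + rho) <= INR N * (1 - rho)).
    { replace (3 * (1 + rho)) with (3 * (1 + rho) / (1 - rho) * (1 - rho)) by (field; lra).
      apply Rmult_le_compat_r; lra. }
    assert (3 * (1 + rho) <= (INR n + 1) * (1 - rho)).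
    { apply (Rle_trans _ (INR N * (1 - rho))); [lra | apply Rmult_le_compat_r; lra]. }
    assert ((1 - rho) * (3 * (1 + rho)) <= (1 - rho) * ((INR n + 1) * (1 - rho)))
      by (apply Rmult_le_compat_l; lra).
    nra. }
  nra.
Qed.

Lemma apath0_even_scaled k : INR (apath (2 * k) 0) / 2 ^ (2 * k) = central k / (INR k + 1).
Proof.
  pose proof (asum_S (2 * k)) as R. replace (S (2 * k)) with (2 * k + 1)%nat in R by lia.
  pose proof (asum_even_scaled k) as E0. pose proof (asum_odd_scaled k) as E1.
  rewrite central_S, pow_add, pow_1 in E1.
  assert (0 < 2 ^ (2 * k)) by (apply pow_lt; lra). pose proof (pos_INR k).
  replace (INR (apath (2 * k) 0)) with (2 * asum (2 * k) - asum (2 * k + 1)) by lra.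
  replace (asum (2 * k)) with (central k * 2 ^ (2 * k)) by (rewrite <- E0; field; lra).
  replace (asum (2 * k + 1))
    with (central k * (2 * INR k + 1) / (2 * INR k + 2) * (2 ^ (2 * k) * 2))
    by (rewrite <- E1; field; lra).
  field. lra.
Qed.

Lemma central_sqrt_le k : central k * (2 * INR k + 1) * sqrt (2 * INR k + 1) <= 2 * INR k + 2.
Proof.
  pose proof (pos_INR k). pose proof (central_pos k). pose proof (central_sq_le k).
  pose proof PI2_3_2.
  assert (Hs2 : sqrt (2 * INR k + 1) * sqrt (2 * INR k + 1) = 2 * INR k + 1)
    by (apply sqrt_sqrt; lra).
  pose proof (sqrt_pos (2 * INR k + 1)).
  apply Rsqr_incr_0_var; [unfold Rsqr | lra].
  replace (central k * (2 * INR k + 1) * sqrt (2 * INR k + 1) *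
           (central k * (2 * INR k + 1) * sqrt (2 * INR k + 1)))
    with (central k ^ 2 * (2 * INR k + 1) ^ 2 *
          (sqrt (2 * INR k + 1) * sqrt (2 * INR k + 1))) by ring.
  rewrite Hs2. nra.
Qed.

Lemma apath0_scaled_le n : INR (apath n 0) / 2 ^ n <= 2 * decay_weight n.
Proof.
  pose proof (decay_weight_pos n).
  destruct (Nat.Even_or_Odd n) as [[k ->] | [k ->]].
  2: { rewrite (apath_odd _ 0 k) by lia. simpl INR. unfold Rdiv. lra. }
  rewrite apath0_even_scaled. unfold decay_weight. rewrite mult_INR. change (INR 2) with 2.
  pose proof (central_sqrt_le k). pose proof (pos_INR k).
  assert (0 < sqrt (2 * INR k + 1)) by (apply sqrt_lt_R0; lra).
  apply (Rmult_le_reg_r ((INR k + 1) * ((2 * INR k + 1) * sqrt (2 * INR k + 1)))); [nra |].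
  replace (central k / (INR k + 1) * ((INR k + 1) * ((2 * INR k + 1) * sqrt (2 * INR k + 1))))
    with (central k * (2 * INR k + 1) * sqrt (2 * INR k + 1)) by (field; lra).
  replace (2 * / ((2 * INR k + 1) * sqrt (2 * INR k + 1)) *
           ((INR k + 1) * ((2 * INR k + 1) * sqrt (2 * INR k + 1))))
    with (2 * INR k + 2) by (field; nra).
  assumption.
Qed.

Fixpoint return_conv (lam : R) (n : nat) : R :=
  match n with O => 1 | S n => lam * return_conv lam n + INR (apath n 0) end.

Lemma pow_le_return_conv lam n : 0 <= lam -> lam ^ n <= return_conv lam n.
Proof.
  intros Hlam. induction n; simpl; [lra |]. pose proof (pos_INR (apath n 0)).
  apply (Rmult_le_compat_l lam) in IHn; lra.
Qed.

Lemma return_conv_nonneg lam n : 0 <= lam -> 0 <= return_conv lam n.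
Proof.
  intros Hlam. eapply Rle_trans; [| apply pow_le_return_conv; exact Hlam]. apply pow_le, Hlam.
Qed.

Lemma return_conv_decay lam : 0 <= lam < 2 ->
  exists K, forall n, return_conv lam n <= K * (2 ^ n * decay_weight n).
Proof.
  intros Hlam.
  destruct (damped_recursion_bound decay_weight (fun n => return_conv lam n / 2 ^ n) (lam / 2) 1)
    as [K HK]; try lra.
  - apply decay_weight_pos.
  - apply decay_weight_slow. lra.
  - intros n. simpl. pose proof (apath0_scaled_le n).
    assert (Hp : 0 < 2 ^ n) by (apply pow_lt; lra).
    replace ((lam * return_conv lam n + INR (apath n 0)) / (2 * 2 ^ n))
      with (lam / 2 * (return_conv lam n / 2 ^ n) + INR (apath n 0) / 2 ^ n / 2) by (field; lra).
    lra.
  - exists K. intros n. specialize (HK n). cbv beta in HK.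
    assert (Hp : 0 < 2 ^ n) by (apply pow_lt; lra).
    apply (Rmult_le_compat_r (2 ^ n)) in HK; [| lra].
    replace (return_conv lam n / 2 ^ n * 2 ^ n) with (return_conv lam n) in HK by (field; lra).
    lra.
Qed.

(** * Filtering residues with characters *)

Lemma cos_le_of_abs x y : Rabs x <= y <= PI -> cos y <= cos x.
Proof.
  intros [Hxy HyP]. pose proof (Rabs_pos x).
  assert (Hc : cos x = cos (Rabs x))
    by (unfold Rabs; destruct (Rcase_abs x); [rewrite cos_neg |]; reflexivity).
  rewrite Hc. destruct (Req_dec (Rabs x) y) as [-> | Hne]; [lra |].
  left. apply cos_decreasing_1; lra.
Qed.

Lemma cos_add_nPI x q : cos (x + INR q * PI) = (-1) ^ q * cos x.
Proof.
  induction q; [simpl; rewrite Rmult_0_l, Rplus_0_r; ring |].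
  rewrite S_INR. replace (x + (INR q + 1) * PI) with (x + INR q * PI + PI) by ring.
  rewrite neg_cos, IHq. simpl. ring.
Qed.

Lemma sin_add_nPI x q : sin (x + INR q * PI) = (-1) ^ q * sin x.
Proof.
  induction q; [simpl; rewrite Rmult_0_l, Rplus_0_r; ring |].
  rewrite S_INR. replace (x + (INR q + 1) * PI) with (x + INR q * PI + PI) by ring.
  rewrite neg_sin, IHq. simpl. ring.
Qed.

Section PiFractions.

Variable l : nat.
Hypothesis Hl : (1 <= l)%nat.

Lemma PI_div_pos : 0 < PI / INR l.
Proof. apply Rdiv_lt_0_compat; [apply PI_RGT_0 | apply lt_0_INR; lia]. Qed.

Lemma PI_frac_decompose p :
  PI * INR p / INR l = PI * INR (p mod l) / INR l + INR (p / l) * PI.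
Proof.
  pose proof (lt_0_INR l Hl). rewrite (Nat.div_mod_eq p l) at 1.
  rewrite plus_INR, mult_INR. field. lra.
Qed.

Lemma PI_frac_bounds r : (1 <= r <= l - 1)%nat ->
  PI / INR l <= PI * INR r / INR l <= PI - PI / INR l.
Proof.
  intros Hr. pose proof (lt_0_INR l Hl). pose proof PI_div_pos.
  assert (1 <= INR r) by (apply (le_INR 1); lia).
  assert (INR r + 1 <= INR l) by (rewrite <- S_INR; apply le_INR; lia).
  assert (HaL : PI / INR l * INR l = PI) by (field; lra).
  replace (PI * INR r / INR l) with (PI / INR l * INR r) by (field; lra).
  set (a := PI / INR l) in *. clearbody a. rewrite <- HaL.
  split.
  - rewrite <- (Rmult_1_r a) at 1. apply Rmult_le_compat_l; lra.
  - replace (a * INR l - a) with (a * (INR l - 1)) by ring. apply Rmult_le_compat_l; lra.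
Qed.

Lemma sin_PI_frac_ge r : (1 <= r <= l - 1)%nat -> sin (PI / INR l) <= sin (PI * INR r / INR l).
Proof.
  intros Hr. pose proof (PI_frac_bounds r Hr). pose proof PI_div_pos.
  rewrite <- !cos_shift. apply cos_le_of_abs. split; [apply Rabs_le |]; lra.
Qed.

Lemma cos_PI_frac_le p : (p mod l <> 0)%nat ->
  Rabs (cos (PI * INR p / INR l)) <= cos (PI / INR l).
Proof.
  intros Hp. pose proof (Nat.mod_upper_bound p l ltac:(lia)).
  pose proof (PI_frac_bounds (p mod l) ltac:(lia)). pose proof PI_div_pos.
  rewrite PI_frac_decompose, cos_add_nPI, Rabs_mult, pow_1_abs, Rmult_1_l.
  apply Rabs_le. split.
  - replace (- cos (PI / INR l)) with (cos (PI - PI / INR l))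
      by (rewrite cos_minus, cos_PI, sin_PI; ring).
    apply cos_le_of_abs. split; [rewrite Rabs_right |]; lra.
  - apply cos_le_of_abs. split; [rewrite Rabs_right |]; lra.
Qed.

Lemma sin_PI_frac_neq0 p : (p mod l <> 0)%nat -> sin (PI * INR p / INR l) <> 0.
Proof.
  intros Hp. pose proof (Nat.mod_upper_bound p l ltac:(lia)).
  pose proof (PI_frac_bounds (p mod l) ltac:(lia)). pose proof PI_div_pos. pose proof PI_RGT_0.
  rewrite PI_frac_decompose, sin_add_nPI.
  apply Rmult_integral_contrapositive. split; [apply pow_nonzero; lra |].
  apply Rgt_not_eq, sin_gt_0; lra.
Qed.

End PiFractions.

Lemma damping_bounds l : (2 <= l)%nat -> 0 <= 2 * cos (PI / INR l) < 2.
Proof.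
  intros Hl. pose proof PI_RGT_0. assert (HlR : 2 <= INR l) by (apply (le_INR 2); lia).
  assert (0 < PI / INR l <= PI / 2).
  { split; [apply Rdiv_lt_0_compat; lra |].
    apply Rmult_le_compat_l; [lra | apply Rinv_le_contravar; lra]. }
  split.
  - assert (0 <= cos (PI / INR l)) by (apply cos_ge_0; lra). lra.
  - assert (cos (PI / INR l) < cos 0) by (apply cos_decreasing_1; lra).
    rewrite cos_0 in *. lra.
Qed.

Lemma cos_sum_dirichlet th K :
  2 * sin (th / 2) * rsum (fun k => cos (INR k * th)) K = sin ((INR K - / 2) * th) + sin (th / 2).
Proof.
  induction K; simpl rsum.
  - simpl INR. replace ((0 - / 2) * th) with (- (th / 2)) by field. rewrite sin_neg. ring.
  - rewrite Rmult_plus_distr_l, IHK, S_INR.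
    replace ((INR K - / 2) * th) with (INR K * th - th / 2) by field.
    replace ((INR K + 1 - / 2) * th) with (INR K * th + th / 2) by field.
    rewrite sin_plus, sin_minus. ring.
Qed.

Lemma cos_sum_roots l y : (1 <= l)%nat ->
  rsum (fun k => cos (INR k * (2 * PI * INR y / INR l))) l =
  if (y mod l =? 0)%nat then INR l else 0.
Proof.
  intros Hl. pose proof (lt_0_INR l Hl).
  destruct (Nat.eqb_spec (y mod l) 0) as [H0 | H0].
  - rewrite (rsum_ext _ (fun _ => 1)), rsum_const; [ring |]. intros k _.
    rewrite (Nat.div_mod_eq y l), H0, Nat.add_0_r, mult_INR.
    replace (INR k * (2 * PI * (INR l * INR (y / l)) / INR l))
      with (0 + 2 * INR (k * (y / l)) * PI) by (rewrite mult_INR; field; lra).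
    rewrite cos_period. apply cos_0.
  - set (th := 2 * PI * INR y / INR l).
    pose proof (cos_sum_dirichlet th l) as D.
    replace ((INR l - / 2) * th) with (- (th / 2) + 2 * INR y * PI) in D
      by (unfold th; field; lra).
    rewrite sin_period, sin_neg, Rplus_opp_l in D.
    replace (th / 2) with (PI * INR y / INR l) in D by (unfold th; field; lra).
    pose proof (sin_PI_frac_neq0 l Hl y H0). apply Rmult_integral in D. nra.
Qed.

Definition chi (l k y : nat) : R := cos (INR k * (2 * PI * INR y / INR l)).

Lemma chi_eigen l k m : (1 <= l)%nat ->
  chi l k m + chi l k (S (S m)) = 2 * cos (PI * INR (2 * k) / INR l) * chi l k (S m).
Proof.
  intros Hl. pose proof (lt_0_INR l Hl). unfold chi.
  set (th := PI * INR (2 * k) / INR l).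
  replace (INR k * (2 * PI * INR m / INR l))
    with (INR k * (2 * PI * INR (S m) / INR l) - th)
    by (unfold th; rewrite mult_INR, S_INR; simpl; field; lra).
  replace (INR k * (2 * PI * INR (S (S m)) / INR l))
    with (INR k * (2 * PI * INR (S m) / INR l) + th)
    by (unfold th; rewrite mult_INR, !S_INR; simpl; field; lra).
  rewrite cos_minus, cos_plus. ring.
Qed.

Lemma chi_abs_le l k y : Rabs (chi l k y) <= 1.
Proof. apply Rabs_le, COS_bound. Qed.

Lemma chi_0 l y : chi l 0 y = 1.
Proof. unfold chi. simpl INR. rewrite Rmult_0_l. apply cos_0. Qed.

Lemma chi_half l k y : (1 <= l)%nat -> (2 * k = l)%nat -> chi l k y = (-1) ^ y.
Proof.
  intros Hl Hk. unfold chi. pose proof (lt_0_INR l Hl).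
  rewrite <- (Rplus_0_l (INR k * _)).
  replace (0 + INR k * (2 * PI * INR y / INR l)) with (0 + INR y * PI).
  - rewrite cos_add_nPI, cos_0. ring.
  - rewrite <- Hk, mult_INR in *. change (INR 2) with 2 in *. field. lra.
Qed.

Lemma asum_mod_characters l n : (1 <= l)%nat ->
  asum_mod l n = / INR l * rsum (fun k => wsum (chi l k) n) l.
Proof.
  intros Hl. pose proof (lt_0_INR l Hl). unfold asum_mod, wsum.
  rewrite rsum_swap, <- rsum_scal. apply rsum_ext. intros m _.
  rewrite rsum_scal. unfold chi. rewrite cos_sum_roots, succ_mod_eqb0 by assumption.
  destruct (_ =? _)%nat; field; lra.
Qed.

Lemma apath_sign n m : INR (apath n m) * (-1) ^ m = INR (apath n m) * (-1) ^ n.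
Proof.
  destruct (Nat.Even_or_Odd (n + m)) as [[h Hh] | [h Hh]].
  - assert (E : (-1) ^ m = (-1) ^ n).
    { rewrite <- (Rmult_1_l ((-1) ^ m)), <- (pow_1_even n).
      replace (2 * n)%nat with (n + n)%nat by lia.
      rewrite pow_add, Rmult_assoc, <- pow_add, Hh, pow_1_even. ring. }
    now rewrite E.
  - rewrite (apath_odd n m h Hh). simpl. ring.
Qed.

Lemma wsum_half l k n : (1 <= l)%nat -> (2 * k = l)%nat ->
  wsum (chi l k) n = (-1) ^ S n * asum n.
Proof.
  intros Hl Hk. unfold wsum, asum. rewrite <- rsum_scal. apply rsum_ext. intros m _.
  rewrite chi_half by assumption. simpl pow.
  replace (INR (apath n m) * (-1 * (-1) ^ m)) with (- (INR (apath n m) * (-1) ^ m)) by ring.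
  rewrite apath_sign. ring.
Qed.

Lemma wsum_bound g mu lam : (forall m, g m + g (S (S m)) = mu * g (S m)) ->
  (forall y, Rabs (g y) <= 1) -> Rabs mu <= lam ->
  forall n, Rabs (wsum g n) <= return_conv lam n.
Proof.
  intros Hg Hg1 Hmu n. induction n.
  - unfold wsum. simpl. rewrite Rplus_0_l, Rmult_1_l. apply Hg1.
  - rewrite (wsum_eigen g mu Hg). simpl return_conv.
    eapply Rle_trans; [apply Rabs_triang |]. rewrite Rabs_Ropp, !Rabs_mult.
    rewrite (Rabs_right (INR (apath n 0))) by (apply Rle_ge, pos_INR).
    pose proof (pos_INR (apath n 0)). pose proof (Hg1 0%nat). pose proof (Rabs_pos mu).
    pose proof (Rabs_pos (wsum g n)).
    apply Rplus_le_compat; [apply Rmult_le_compat; lra |].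
    rewrite <- (Rmult_1_r (INR (apath n 0))) at 2. apply Rmult_le_compat_l; lra.
Qed.

Definition parity_term (l n : nat) : R := if Nat.even l then (-1) ^ S n else 0.

Lemma rsum_half_delta l c : (1 <= l)%nat ->
  rsum (fun k => if (2 * k =? l)%nat then c else 0) l = if Nat.even l then c else 0.
Proof.
  intros Hl. destruct (Nat.Even_or_Odd l) as [[h ->] | [h ->]].
  - rewrite Nat.even_even,
      (rsum_ext _ (fun k => if (k =? h)%nat then c else 0)), rsum_delta.
    + destruct (Nat.ltb_spec h (2 * h)); [reflexivity | lia].
    + intros k _. destruct (Nat.eqb_spec (2 * k) (2 * h)), (Nat.eqb_spec k h); lia || reflexivity.
  - rewrite Nat.even_odd. apply rsum_eq0. intros k _.
    destruct (Nat.eqb_spec (2 * k) (2 * h + 1)); [lia | reflexivity].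
Qed.

Definition char_main (l n k : nat) : R :=
  (if (k =? 0)%nat then asum n else 0) + (if (2 * k =? l)%nat then (-1) ^ S n * asum n else 0).

Lemma rsum_char_main l n : (2 <= l)%nat -> rsum (char_main l n) l = (1 + parity_term l n) * asum n.
Proof.
  intros Hl. unfold char_main, parity_term. rewrite rsum_plus, rsum_delta, rsum_half_delta by lia.
  destruct (Nat.ltb_spec 0 l); [| lia]. destruct (Nat.even l); ring.
Qed.

(* Only the trivial character (k = 0) and, for even l, the alternating one
   (2k = l) have eigenvalue of modulus 2; all others are damped. *)
Lemma wsum_chi_approx l n k : (2 <= l)%nat -> (k < l)%nat ->
  Rabs (wsum (chi l k) n - char_main l n k) <= return_conv (2 * cos (PI / INR l)) n.
Proof.
  intros Hl Hk. pose proof (damping_bounds l Hl). unfold char_main.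
  destruct (Nat.eqb_spec k 0) as [-> | Hk0]; [| destruct (Nat.eqb_spec (2 * k) l) as [Hkl | Hkl]].
  - replace (wsum (chi l 0) n) with (asum n)
      by (rewrite asum_wsum; apply rsum_ext; intros; now rewrite chi_0).
    destruct (Nat.eqb_spec (2 * 0) l); [lia |].
    rewrite Rplus_0_r, Rminus_diag, Rabs_R0. apply return_conv_nonneg. lra.
  - rewrite wsum_half by lia. rewrite Rplus_0_l, Rminus_diag, Rabs_R0.
    apply return_conv_nonneg. lra.
  - rewrite Rplus_0_l, Rminus_0_r.
    apply (wsum_bound _ (2 * cos (PI * INR (2 * k) / INR l))).
    + intros m. apply chi_eigen. lia.
    + apply chi_abs_le.
    + rewrite Rabs_mult, Rabs_right by lra. apply Rmult_le_compat_l; [lra |].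
      apply cos_PI_frac_le; [lia |]. intros Hmod.
      apply Nat.Div0.mod_divides in Hmod as [[|[|q]] Hq]; nia.
Qed.

Theorem asum_mod_approx l n : (2 <= l)%nat ->
  Rabs (asum_mod l n - (1 + parity_term l n) / INR l * asum n) <=
  return_conv (2 * cos (PI / INR l)) n.
Proof.
  intros Hl. pose proof (lt_0_INR l ltac:(lia)).
  rewrite asum_mod_characters by lia.
  replace ((1 + parity_term l n) / INR l * asum n) with (/ INR l * rsum (char_main l n) l)
    by (rewrite rsum_char_main by lia; field; lra).
  rewrite <- Rmult_minus_distr_l, <- rsum_minus, Rabs_mult, Rabs_right
    by (apply Rle_ge, Rlt_le, Rinv_0_lt_compat; lra).
  apply (Rmult_le_reg_l (INR l)); [lra |]. rewrite <- Rmult_assoc, Rinv_r, Rmult_1_l by lra.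
  rewrite <- rsum_const. apply rsum_abs. intros k Hk. apply wsum_chi_approx; assumption.
Qed.

(** * The strip below the first site l - 1 *)

(* Sites 0, ..., l - 2 evolve as a walk killed at -1 and at l - 1. *)
Lemma strip_step l n (g : nat -> R) : (2 <= l)%nat -> g 0%nat = 0 -> g l = 0 ->
  rsum (fun r => INR (bpath l (S n) r) * g (S r)) (l - 1) =
  rsum (fun r => INR (bpath l n r) * (g r + g (S (S r)))) (l - 1).
Proof.
  intros Hl Hg0 Hgl. destruct l as [|[|L]]; [lia | lia |].
  replace (S (S L) - 1)%nat with (S L) by lia. set (l := S (S L)) in *.
  rewrite (rsum_ext _ (fun r => INR (bpath_left l n r) * g (S r) +
                                (if (r <? L)%nat then INR (bpath l n (S r)) else 0) * g (S r))).
  2: { intros r Hr. assert (Hm : (r mod l = r)%nat) by (apply Nat.mod_small; unfold l; lia).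
       destruct (Nat.ltb_spec r L).
       - rewrite bpath_S_generic by (rewrite Hm; unfold l; lia). rewrite plus_INR. ring.
       - rewrite bpath_S_mod_pred2 by (rewrite ?Hm; unfold l; lia). ring. }
  rewrite (rsum_ext (fun r => INR (bpath l n r) * (g r + g (S (S r))))
             (fun r => INR (bpath l n r) * g (S (S r)) + INR (bpath l n r) * g r))
    by (intros; ring).
  rewrite !rsum_plus. f_equal.
  - rewrite rsum_shift. cbn [rsum bpath_left INR]. fold l. rewrite Hgl. ring.
  - rewrite (rsum_shift (fun r => INR (bpath l n r) * g r)), Hg0. cbn [rsum].
    destruct (Nat.ltb_spec L L); [lia |]. rewrite Rmult_0_l, Rplus_0_r, Rmult_0_r, Rplus_0_l.
    apply rsum_ext. intros i Hi. destruct (Nat.ltb_spec i L); [reflexivity | lia].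
Qed.

Lemma strip_sum_sin l n : (2 <= l)%nat ->
  rsum (fun r => INR (bpath l n r) * sin (PI * INR (S r) / INR l)) (l - 1) =
  (2 * cos (PI / INR l)) ^ n * sin (PI / INR l).
Proof.
  intros Hl. pose proof (lt_0_INR l ltac:(lia)). induction n.
  - destruct l as [|[|L]]; [lia | lia |]. replace (S (S L) - 1)%nat with (S L) by lia.
    rewrite rsum_shift, rsum_eq0 by (intros; rewrite bpath_gt by lia; apply Rmult_0_l).
    cbn [bpath Nat.eqb pow]. change (INR 1) with 1.
    replace (PI * 1 / INR (S (S L))) with (PI / INR (S (S L))) by (field; lra). ring.
  - rewrite (strip_step l n (fun y => sin (PI * INR y / INR l))); [| assumption | |].
    2: { simpl INR. rewrite Rmult_0_r. unfold Rdiv. rewrite Rmult_0_l. apply sin_0. }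
    2: { replace (PI * INR l / INR l) with PI by (field; lra). apply sin_PI. }
    simpl pow. rewrite Rmult_assoc, <- IHn, <- rsum_scal. apply rsum_ext. intros r _.
    set (th := PI / INR l).
    replace (PI * INR r / INR l) with (PI * INR (S r) / INR l - th)
      by (unfold th; rewrite S_INR; field; lra).
    replace (PI * INR (S (S r)) / INR l) with (PI * INR (S r) / INR l + th)
      by (unfold th; rewrite !S_INR; field; lra).
    rewrite sin_minus, sin_plus. ring.
Qed.

Theorem bsum_head_le l n : (2 <= l)%nat -> bsum_head l n <= (2 * cos (PI / INR l)) ^ n.
Proof.
  intros Hl.
  assert (Hs : 0 < sin (PI / INR l)).
  { pose proof (PI_div_pos l ltac:(lia)). pose proof (PI_frac_bounds l ltac:(lia) 1 ltac:(lia)).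
    apply sin_gt_0; lra. }
  apply (Rmult_le_reg_r (sin (PI / INR l))); [exact Hs |].
  rewrite <- strip_sum_sin by exact Hl. unfold bsum_head. rewrite Rmult_comm, <- rsum_scal.
  apply rsum_le. intros r Hr. rewrite Rmult_comm. apply Rmult_le_compat_l; [apply pos_INR |].
  apply sin_PI_frac_ge; lia.
Qed.

Lemma b_asym_eq l n : (1 <= l)%nat ->
  b_asym l n = (1 + (1 + parity_term l n) / INR l) / 2 * a_asym n.
Proof.
  intros Hl. pose proof (lt_0_INR l Hl). unfold b_asym, parity_term.
  destruct (Nat.even l); field; lra.
Qed.

Lemma parity_coef_bounds l n : (2 <= l)%nat -> 0 <= (1 + parity_term l n) / INR l <= 1.
Proof.
  intros Hl. assert (HlR : 2 <= INR l) by (apply (le_INR 2); lia).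
  assert (Hp : -1 <= parity_term l n <= 1).
  { unfold parity_term. destruct (Nat.even l); [| lra].
    pose proof (pow_1_abs (S n)) as H. unfold Rabs in H. destruct (Rcase_abs _); lra. }
  split.
  - apply Rmult_le_pos; [lra | left; apply Rinv_0_lt_compat; lra].
  - apply (Rmult_le_reg_r (INR l)); [lra |]. unfold Rdiv.
    rewrite Rmult_assoc, Rinv_l by lra. lra.
Qed.

Lemma decay_weight_scale n : (1 <= n)%nat ->
  2 ^ n * decay_weight n <= / sqrt (INR n) * 2 ^ n * / INR n.
Proof.
  intros Hn. assert (HnR : 1 <= INR n) by (apply (le_INR 1); lia).
  assert (Hs : 0 < sqrt (INR n)) by (apply sqrt_lt_R0; lra).
  assert (sqrt (INR n) <= sqrt (INR n + 1)) by (apply sqrt_le_1_alt; lra).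
  assert (Hp : 0 < 2 ^ n) by (apply pow_lt; lra).
  unfold decay_weight.
  replace (/ sqrt (INR n) * 2 ^ n * / INR n) with (2 ^ n * / (INR n * sqrt (INR n)))
    by (field; lra).
  apply Rmult_le_compat_l; [lra |]. apply Rinv_le_contravar; [nra |].
  apply Rmult_le_compat; lra.
Qed.

Lemma bsum_head_nonneg l n : 0 <= bsum_head l n.
Proof.
  unfold bsum_head. rewrite <- (rsum_eq0 (fun _ => 0) (l - 1)) by reflexivity.
  apply rsum_le. intros; apply pos_INR.
Qed.

Lemma bsum_error_le l n : (2 <= l)%nat -> (1 <= n)%nat ->
  Rabs (INR (bsum l n) - b_asym l n) <=
  2 / INR n * a_asym n + return_conv (2 * cos (PI / INR l)) n.
Proof.
  intros Hl Hn. set (lam := 2 * cos (PI / INR l)). set (p := (1 + parity_term l n) / INR l).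
  pose proof (parity_coef_bounds l n Hl) as Hp. fold p in Hp.
  pose proof (asum_asymptotic n Hn) as HA.
  pose proof (asum_mod_approx l n Hl) as HE. fold lam p in HE.
  pose proof (bsum_head_le l n Hl) as HK. fold lam in HK.
  pose proof (bsum_head_nonneg l n).
  pose proof (pow_le_return_conv lam n (proj1 (damping_bounds l Hl))).
  replace (INR (bsum l n) - b_asym l n)
    with (((1 + p) * (asum n - a_asym n) + (asum_mod l n - p * asum n) + bsum_head l n) / 2)
    by (rewrite b_asym_eq by lia; fold p; pose proof (bsum_decomposition l n Hl); lra).
  unfold Rdiv at 1. rewrite Rabs_mult, (Rabs_right (/ 2)) by lra.
  assert (Rabs ((1 + p) * (asum n - a_asym n)) <= 2 * (2 / INR n * a_asym n)).
  { rewrite Rabs_mult, Rabs_right by lra.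
    apply Rmult_le_compat; [lra | apply Rabs_pos | lra | exact HA]. }
  pose proof (Rabs_triang ((1 + p) * (asum n - a_asym n) + (asum_mod l n - p * asum n))
                          (bsum_head l n)).
  pose proof (Rabs_triang ((1 + p) * (asum n - a_asym n)) (asum_mod l n - p * asum n)).
  rewrite (Rabs_right (bsum_head l n)) in * by lra. lra.
Qed.

Theorem bsum_error_bound l : (2 <= l)%nat -> exists C, 0 <= C /\ forall n, (1 <= n)%nat ->
  Rabs (INR (bsum l n) - b_asym l n) <= C * (/ sqrt (INR n) * 2 ^ n) * / INR n.
Proof.
  intros Hl. set (lam := 2 * cos (PI / INR l)).
  destruct (return_conv_decay lam (damping_bounds l Hl)) as [K HK].
  assert (HK0 : 0 <= K).
  { pose proof (HK 0%nat) as H0. simpl in H0. pose proof (decay_weight_pos 0). nra. }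
  pose proof (sqrt_pos (2 / PI)).
  exists (2 * sqrt (2 / PI) + K). split; [lra |]. intros n Hn.
  assert (0 < / INR n) by (apply Rinv_0_lt_compat, lt_0_INR; lia).
  eapply Rle_trans; [apply bsum_error_le; assumption |]. fold lam.
  eapply Rle_trans; [apply Rplus_le_compat_l, HK |].
  eapply Rle_trans; [apply Rplus_le_compat_l, Rmult_le_compat_l, decay_weight_scale; assumption |].
  assert (0 < sqrt (INR n)) by (apply sqrt_lt_R0, lt_0_INR; lia).
  unfold a_asym. right. field. split; [apply not_0_INR; lia | lra].
Qed.

Lemma b_asym_ge l n : (2 <= l)%nat -> (1 <= n)%nat -> a_asym n / 2 <= b_asym l n.
Proof.
  intros Hl Hn. rewrite b_asym_eq by lia.
  pose proof (parity_coef_bounds l n Hl). pose proof (a_asym_pos n Hn).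
  apply (Rle_trans _ (1 / 2 * a_asym n)); [right; field | apply Rmult_le_compat_r; lra].
Qed.

Lemma bsum_relative_error l : (2 <= l)%nat -> exists C, forall n, (1 <= n)%nat ->
  0 < b_asym l n /\ Rabs (INR (bsum l n) - b_asym l n) <= C * b_asym l n * / INR n.
Proof.
  intros Hl. destruct (bsum_error_bound l Hl) as [C [HC0 HC]].
  assert (Hs : 0 < sqrt (2 / PI))
    by (apply sqrt_lt_R0, Rdiv_lt_0_compat; [lra | apply PI_RGT_0]).
  exists (2 * C / sqrt (2 / PI)). intros n Hn.
  pose proof (b_asym_ge l n Hl Hn). pose proof (a_asym_pos n Hn).
  assert (HnR : 0 < / INR n) by (apply Rinv_0_lt_compat, lt_0_INR; lia).
  split; [lra |]. eapply Rle_trans; [apply HC, Hn |].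
  assert (HD : / sqrt (INR n) * 2 ^ n <= 2 * b_asym l n / sqrt (2 / PI)).
  { apply (Rmult_le_reg_l (sqrt (2 / PI))); [exact Hs |].
    replace (sqrt (2 / PI) * (2 * b_asym l n / sqrt (2 / PI))) with (2 * b_asym l n)
      by (field; lra).
    unfold a_asym in H. lra. }
  apply Rmult_le_compat_r; [lra |].
  replace (2 * C / sqrt (2 / PI) * b_asym l n) with (C * (2 * b_asym l n / sqrt (2 / PI)))
    by (field; lra).
  apply Rmult_le_compat_l; lra.
Qed.

Lemma Un_cv_ratio_1 (u v : nat -> R) C :
  (forall n, (1 <= n)%nat -> 0 < v n /\ Rabs (u n - v n) <= C * v n * / INR n) ->
  Un_cv (fun n => u n / v n) 1.
Proof.
  intros H eps Heps. destruct (INR_archimed eps (Rabs C) Heps) as [N HN].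
  exists (S N). intros n Hn. destruct (H n ltac:(lia)) as [Hv Hb].
  assert (HnR : INR N < INR n) by (apply lt_INR; lia). pose proof (pos_INR N).
  unfold Rdist. replace (u n / v n - 1) with ((u n - v n) * / v n) by (field; lra).
  rewrite Rabs_mult, (Rabs_right (/ v n)) by (apply Rle_ge, Rlt_le, Rinv_0_lt_compat, Hv).
  apply (Rle_lt_trans _ (C * / INR n)).
  - apply (Rmult_le_reg_r (v n)); [exact Hv |].
    rewrite Rmult_assoc, Rinv_l, Rmult_1_r by lra. lra.
  - apply (Rmult_lt_reg_r (INR n)); [lra |]. rewrite Rmult_assoc, Rinv_l by lra.
    pose proof (Rle_abs C). nra.
Qed.

Theorem theorem2p12 (l : nat) (hl : (2 <= l)%nat) :
  Un_cv (fun n => INR (bsum l n) / b_asym l n) 1 /\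
  (exists C : R, exists N : nat, forall n : nat, (N <= n)%nat ->
     Rabs (INR (bsum l n) - b_asym l n) / (/ sqrt (INR n) * 2 ^ n)
       <= C * / INR n).
Proof.
  split.
  - destruct (bsum_relative_error l hl) as [C HC]. exact (Un_cv_ratio_1 _ _ C HC).
  - destruct (bsum_error_bound l hl) as [C [_ HC]]. exists C, 1%nat. intros n Hn.
    assert (HD : 0 < / sqrt (INR n) * 2 ^ n).
    { apply Rmult_lt_0_compat; [apply Rinv_0_lt_compat, sqrt_lt_R0, lt_0_INR; lia |].
      apply pow_lt. lra. }
    apply (Rmult_le_reg_r (/ sqrt (INR n) * 2 ^ n)); [exact HD |].
    unfold Rdiv. rewrite Rmult_assoc, Rinv_l, Rmult_1_r by lra.
    rewrite Rmult_assoc, (Rmult_comm (/ INR n)), <- Rmult_assoc. apply HC, Hn.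
Qed.
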